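(* Let $R$ be a Noetherian commutative ring and let $I,J,K$ be ideals of $R$. Then there is an integer $t>0$ such that $$(J+I^nK):I = (J:I)+I^{n-1}K\quad\text{for every } n\geq t.$$
   Context: For ideals $A,B$ of $R$, $A:B=\{r\in R: rB\subseteq A\}$. *)

From mathcomp Require Import all_boot all_algebra.
Set Implicit Arguments. Unset Strict Implicit. Unset Printing Implicit Defensive.
Import GRing.Theory.
Local Open Scope ring_scope.

Section Ideals.
Variable R : comPzRingType.

Definition is_ideal (I : R -> Prop) : Prop :=
  I 0 /\ (forall x y, I x -> I y -> I (x + y)) /\ (forall r x, I x -> I (r * x)).

Definition set_eq (A B : R -> Prop) : Prop := forall x, A x <-> B x.

Definition idealD (I J : R -> Prop) : R -> Prop :=
  fun x => exists a b, I a /\ J b /\ x = a + b.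

Definition idealM (I J : R -> Prop) : R -> Prop :=
  fun x => exists (m : nat) (a b : 'I_m -> R),
    (forall i, I (a i) /\ J (b i)) /\ x = \sum_(i < m) a i * b i.

Definition idealT : R -> Prop := fun _ => True.

Fixpoint idealX (I : R -> Prop) (n : nat) : R -> Prop :=
  match n with
  | O => idealT
  | S k => idealM (idealX I k) I
  end.

Definition colon (A B : R -> Prop) : R -> Prop :=
  fun r => forall b, B b -> A (r * b).

Definition noetherian : Prop :=
  forall C : nat -> R -> Prop,
    (forall k, is_ideal (C k)) ->
    (forall k x, C k x -> C k.+1 x) ->
    exists m, forall k, (m <= k)%N -> set_eq (C k) (C m).

End Ideals.

From HB Require Import structures.
From mathcomp Require Import boolp functions.
From mathcomp Require Import all_boot all_algebra.
From mathcomp Require Import ring.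
Set Implicit Arguments. Unset Strict Implicit. Unset Printing Implicit Defensive.
Import GRing.Theory.
Local Open Scope ring_scope.

(* Write [I = (a_0, ..., a_(s-1))] and let [a_j] act on graded vectors
   [sum_k v_k t^k] ([v_k] in [R^s]) as multiplication by [a_j t].  For
   [x] in [(J + I^n K) : I] choose [j_i] in [J] with [u_i := x a_i - j_i] in
   [I^n K]; the vector [u] in degree [n] lies in the Rees module
   [(+)_k I^k R^s t^k], which is Noetherian by the Hilbert basis theorem (proved
   for modules with commuting operators by the leading-coefficient argument).
   Hence the submodules spanned by these vectors for degrees [<= c] stabilize at
   some [c].  Every element [v] of the stable submodule satisfies
   [v_k = y_k (a_i)_i] modulo [J^s], with [y_k] in [(J + I^k K) : I] for [k <= c]
   and in [J + I^(k-1) K] for [k > c]: this holds for the generators and is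
   preserved by multiplication by [a_j t], as [I ((J + I^c K) : I)] is contained
   in [J + I^c K].  For [v = u] and [n > c] this gives [(x - y_n) I <= J], i.e.
   [x] is in [(J : I) + I^(n-1) K]. *)

Section IdealFacts.
Variable R : comPzRingType.
Implicit Types (I J K A B : R -> Prop) (r x y : R).

Lemma ideal0 I : is_ideal I -> I 0.
Proof. by case. Qed.

Lemma ideal_add I x y : is_ideal I -> I x -> I y -> I (x + y).
Proof. by case=> _ []; auto. Qed.

Lemma ideal_mull I r x : is_ideal I -> I x -> I (r * x).
Proof. by case=> _ []; auto. Qed.

Lemma ideal_mulr I r x : is_ideal I -> I x -> I (x * r).
Proof. by rewrite mulrC; apply: ideal_mull. Qed.

Lemma ideal_opp I x : is_ideal I -> I x -> I (- x).
Proof. by move=> iI Ix; rewrite -mulN1r; apply: ideal_mull. Qed.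

Lemma ideal_sub I x y : is_ideal I -> I x -> I y -> I (x - y).
Proof. by move=> iI Ix Iy; apply: ideal_add => //; exact: ideal_opp. Qed.

Lemma ideal_sum I m (F : 'I_m -> R) :
  is_ideal I -> (forall i, I (F i)) -> I (\sum_(i < m) F i).
Proof.
by move=> iI IF; apply: (big_ind I) => //; [exact: ideal0 | move=> *; exact: ideal_add].
Qed.

Lemma idealD_ideal I J : is_ideal I -> is_ideal J -> is_ideal (idealD I J).
Proof.
move=> iI iJ; split; [|split].
- by exists 0, 0; rewrite addr0; split; [exact: ideal0 | split; [exact: ideal0|]].
- move=> _ _ [x1 [y1 [Ix1 [Jy1 ->]]]] [x2 [y2 [Ix2 [Jy2 ->]]]].
  exists (x1 + x2), (y1 + y2); split; [exact: ideal_add|split; [exact: ideal_add|]].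
  by rewrite addrACA.
- move=> r _ [x [y [Ix [Jy ->]]]]; exists (r * x), (r * y).
  by split; [exact: ideal_mull|split; [exact: ideal_mull|rewrite mulrDr]].
Qed.

Lemma idealM_mul A B x y : A x -> B y -> idealM A B (x * y).
Proof. by move=> Ax By; exists 1%N, (fun=> x), (fun=> y); rewrite big_ord1. Qed.

Lemma idealM_ideal A B : is_ideal A -> is_ideal (idealM A B).
Proof.
move=> iA; split; [|split].
- by exists 0%N, (fun=> 0), (fun=> 0); rewrite big_ord0; split => // -[].
- move=> _ _ [m1 [x1 [y1 [H1 ->]]]] [m2 [x2 [y2 [H2 ->]]]].
  pose glue (f1 : 'I_m1 -> R) (f2 : 'I_m2 -> R) i :=
    match split i with inl j => f1 j | inr j => f2 j end.
  exists (m1 + m2)%N, (glue x1 x2), (glue y1 y2); split.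
    by move=> i; rewrite /glue; case: split.
  by rewrite big_split_ord /glue; congr (_ + _); apply: eq_bigr => i _;
    [rewrite (unsplitK (inl i)) | rewrite (unsplitK (inr i))].
- move=> r _ [m [x [y [H ->]]]]; exists m, (fun i => r * x i), y; split.
    by move=> i; have [Ax By] := H i; split => //; exact: ideal_mull.
  by rewrite mulr_sumr; apply: eq_bigr => i _; rewrite mulrA.
Qed.

Lemma idealX_ideal I k : is_ideal (idealX I k).
Proof. by elim: k => [|k IH] /=; [do !split | exact: idealM_ideal]. Qed.

Lemma idealXM_ideal I K k : is_ideal (idealM (idealX I k) K).
Proof. exact/idealM_ideal/idealX_ideal. Qed.

Lemma idealXM_mulS I K k d w :
  I d -> idealM (idealX I k) K w -> idealM (idealX I k.+1) K (d * w).
Proof.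
move=> Id [m [x [y [H ->]]]]; exists m, (fun i => x i * d), y; split.
  by move=> i; have [? ?] := H i; split => //; exact: idealM_mul.
by rewrite mulr_sumr; apply: eq_bigr => i _; rewrite mulrCA mulrA.
Qed.

Lemma colon_ideal A B : is_ideal A -> is_ideal (colon A B).
Proof.
move=> iA; split; [|split].
- by move=> b _; rewrite mul0r; exact: ideal0.
- by move=> x y Ax Ay b Bb; rewrite mulrDl; apply: ideal_add; auto.
- by move=> r x Ax b Bb; rewrite -mulrA; apply: ideal_mull; auto.
Qed.

Lemma idealM_subl A B x : is_ideal A -> idealM A B x -> A x.
Proof.
move=> iA [m [y [z [H ->]]]]; apply: ideal_sum => // i.
by apply: ideal_mulr => //; case: (H i).
Qed.

Lemma idealD_idealXM_mulS I J K k d y : is_ideal J -> I d ->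
  idealD J (idealM (idealX I k) K) y -> idealD J (idealM (idealX I k.+1) K) (d * y).
Proof.
move=> iJ Id [j [w [Jj [Iw ->]]]]; exists (d * j), (d * w).
by split; [exact: ideal_mull | split; [exact: idealXM_mulS | rewrite mulrDr]].
Qed.

Lemma idealD_colon_sub I J K n x : (0 < n)%N ->
  idealD (colon J I) (idealM (idealX I n.-1) K) x ->
  colon (idealD J (idealM (idealX I n) K)) I x.
Proof.
move=> n0 [u [z [Ju [Iz ->]]]] b Ib; exists (u * b), (z * b); split; first exact: Ju.
by split; [rewrite mulrC -(prednK n0); exact: idealXM_mulS | rewrite mulrDl].
Qed.

Definition span_seq (l : seq R) x := exists r : nat -> R, x = \sum_(j < size l) r j * l`_j.

Lemma span_seq_ideal l : is_ideal (span_seq l).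
Proof.
split; [|split].
- by exists (fun=> 0); rewrite big1 // => j _; rewrite mul0r.
- move=> _ _ [r1 ->] [r2 ->]; exists (fun j => r1 j + r2 j).
  by rewrite -big_split; apply: eq_bigr => j _; rewrite mulrDl.
- move=> r _ [r1 ->]; exists (fun j => r * r1 j).
  by rewrite mulr_sumr; apply: eq_bigr => j _; rewrite mulrA.
Qed.

Lemma span_seq_rcons l y x : span_seq l x -> span_seq (rcons l y) x.
Proof.
move=> [r ->]; exists (fun j => if (j < size l)%N then r j else 0).
rewrite size_rcons big_ord_recr /= ltnn mul0r addr0.
by apply: eq_bigr => j _; rewrite ltn_ord nth_rcons ltn_ord.
Qed.

Lemma span_seq_last l y : span_seq (rcons l y) y.
Proof.
exists (fun j => (j == size l)%:R); rewrite size_rcons big_ord_recr /= eqxx mul1r.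
by rewrite nth_rcons ltnn eqxx big1 ?add0r // => j _; rewrite ltn_eqF ?mul0r.
Qed.

Lemma noetherian_fg I : noetherian R -> is_ideal I ->
  exists l : seq R, (forall j, I l`_j) /\ forall x, I x -> span_seq l x.
Proof.
move=> noeR iI.
have next_ex l : exists y, I y /\ ((exists z, I z /\ ~ span_seq l z) -> ~ span_seq l y).
  have [[y [Iy Ny]]|N] := pselect (exists z, I z /\ ~ span_seq l z).
    by exists y.
  by exists 0; split => //; exact: ideal0.
have [next nextP] := choice next_ex.
pose fix gens n := if n is n'.+1 then rcons (gens n') (next (gens n')) else [::].
have [N HN] := noeR _ (fun n => span_seq_ideal (gens n))
  (fun n => @span_seq_rcons _ _).
have gensI n j : I (gens n)`_j.
  elim: n j => [|n IH] j /=; first by rewrite nth_nil; exact: ideal0.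
  rewrite nth_rcons; case: ltnP => _; first exact: IH.
  by case: eqP => _; [exact: (nextP _).1 | exact: ideal0].
exists (gens N); split => [|x Ix]; first exact: gensI.
apply: contrapT => Nx.
apply: (proj2 (nextP (gens N))); first by exists x.
by apply/(HN N.+1 (leqnSn N)); exact: span_seq_last.
Qed.

End IdealFacts.

Lemma iter_is_linear (R : pzRingType) (V : lmodType R) (f : {linear V -> V}) n :
  linear (iter n f).
Proof. by elim: n => [|n IH] r u v //=; rewrite IH linearP. Qed.

HB.instance Definition _ (R : pzRingType) (V : lmodType R) (f : {linear V -> V}) n :=
  GRing.isLinear.Build R V V *:%R (iter n f) (iter_is_linear f n).

Lemma chain_mono T (C : nat -> T -> Prop) : (forall k x, C k x -> C k.+1 x) ->
  forall k k' x, (k <= k')%N -> C k x -> C k' x.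
Proof.
by move=> incC k k' x /subnK <-; elim: (k' - k)%N => //= n IH /IH; exact: incC.
Qed.

Section HilbertBasis.
Variables (R : comPzRingType) (V : lmodType R) (sigma : nat -> {linear V -> V}).
Hypothesis sigmaC : forall i j v, sigma i (sigma j v) = sigma j (sigma i v).
Implicit Types (M N : V -> Prop) (u v w : V).

Definition submodule m N := [/\ N 0, forall u v, N u -> N v -> N (u + v),
  forall r u, N u -> N (r *: u) & forall j u, (j < m)%N -> N u -> N (sigma j u)].

Lemma submoduleB m N u v : submodule m N -> N u -> N v -> N (u - v).
Proof. by case=> _ ND NZ _ Nu Nv; rewrite -scaleN1r; auto. Qed.

Definition noetherian_mod m M := forall C : nat -> V -> Prop,
  (forall k, submodule m (C k)) -> (forall k v, C k v -> C k.+1 v) ->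
  (forall k v, C k v -> M v) -> exists c, forall k v, (c <= k)%N -> C k v -> C c v.

Definition span m (P : V -> Prop) v :=
  forall N, submodule m N -> (forall w, P w -> N w) -> N v.

Lemma span_submodule m P : submodule m (span m P).
Proof.
split=> [N [] // | u v Pu Pv N sN PN | r u Pu N sN PN | j u jm Pu N sN PN];
  have [_ ND NZ NS] := sN.
- by apply: ND; [exact: Pu | exact: Pv].
- by apply: NZ; exact: Pu.
- by apply: NS => //; exact: Pu.
Qed.

Lemma iter_sigmaC n i j v : iter n (sigma i) (sigma j v) = sigma j (iter n (sigma i) v).
Proof. by elim: n => //= n ->; rewrite sigmaC. Qed.

Section Adjoin.
Variable m : nat.
Local Notation X := (sigma m).

Definition polyX d (f : nat -> V) := \sum_(i < d) iter i X (f i).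

Lemma polyX_is_linear d : linear (polyX d).
Proof.
move=> r f g; rewrite /polyX scaler_sumr -big_split /=.
by apply: eq_bigr => i _; rewrite linearP.
Qed.

HB.instance Definition _ d :=
  GRing.isLinear.Build R (nat -> V) V *:%R (polyX d) (polyX_is_linear d).

Lemma polyXS d f : polyX d.+1 f = polyX d f + iter d X (f d).
Proof. by rewrite /polyX big_ord_recr. Qed.

Lemma polyX_sub_lead d f g : f d = g d ->
  polyX d.+1 f - polyX d.+1 g = polyX d (f - g).
Proof.
move=> fg; rewrite -linearB /= polyXS.
have -> : (f - g) d = 0 by apply/eqP; rewrite subr_eq0 fg.
by rewrite linear0 addr0.
Qed.

Lemma polyX_sigma j d f : sigma j (polyX d f) = polyX d (sigma j \o f).
Proof. by rewrite /polyX linear_sum; apply: eq_bigr => i _; rewrite iter_sigmaC. Qed.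

Lemma polyX_mulX d f :
  polyX d.+1 (fun i => if i is i'.+1 then f i' else 0) = X (polyX d f).
Proof.
rewrite /polyX big_ord_recl linear0 add0r linear_sum.
by apply: eq_bigr => i _; rewrite lift0.
Qed.

Lemma polyX_widen d D f : (d <= D)%N ->
  polyX d f = polyX D (fun i => if (i < d)%N then f i else 0).
Proof.
move=> dD; rewrite /polyX (big_ord_widen D (fun i => iter i X (f i))) // big_mkcond.
by apply: eq_bigr => i _; case: ifP; rewrite ?linear0.
Qed.

Definition adjoin M v :=
  exists d f, (forall i, (i < d)%N -> M (f i)) /\ v = polyX d f.

Lemma adjoin_sub M u : M u -> adjoin M u.
Proof.
by move=> Mu; exists 1%N, (fun=> u); split => //; rewrite /polyX big_ord1.
Qed.

Lemma adjoin_submodule M : submodule m M -> submodule m.+1 (adjoin M).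
Proof.
case=> M0 MD MZ MS; split.
- by exists 0%N, (fun=> 0); rewrite /polyX big_ord0.
- move=> _ _ [d1 [f1 [Mf1 ->]]] [d2 [f2 [Mf2 ->]]].
  pose pad d (f : nat -> V) i := if (i < d)%N then f i else 0.
  exists (maxn d1 d2), (pad d1 f1 + pad d2 f2); split.
    by move=> i _; rewrite /pad; apply: MD; case: ltnP; auto.
  by rewrite (polyX_widen f1 (leq_maxl d1 d2)) (polyX_widen f2 (leq_maxr d1 d2)) -linearD.
- move=> r _ [d [f [Mf ->]]]; exists d, (r *: f); split; last by rewrite linearZ.
  by move=> i /Mf; exact: MZ.
- move=> j _ jm [d [f [Mf ->]]]; rewrite ltnS leq_eqVlt in jm.
  have [/eqP ->|{}jm] := orP jm.
    exists d.+1, (fun i => if i is i'.+1 then f i' else 0).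
    by rewrite polyX_mulX; split => // -[|i] //= /Mf.
  exists d, (sigma j \o f); rewrite polyX_sigma; split => // i /Mf; exact: MS.
Qed.

Section Chain.
Variables (M : V -> Prop) (C : nat -> V -> Prop).
Hypotheses (subM : submodule m M) (noeM : noetherian_mod m M).
Hypotheses (subC : forall k, submodule m.+1 (C k)) (incC : forall k v, C k v -> C k.+1 v).
Hypothesis C_adjoin : forall k v, C k v -> adjoin M v.

Definition lead k d u :=
  exists f, [/\ forall i, (i <= d)%N -> M (f i), f d = u & C k (polyX d.+1 f)].

Lemma lead_in k d u : lead k d u -> M u.
Proof. by case=> f [Mf <- _]; exact: Mf. Qed.

Lemma lead_submodule k d : submodule m (lead k d).
Proof.
have [M0 MD MZ MS] := subM; have [C0 CD CZ CS] := subC k; split.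
- by exists (fun=> 0); split => //; rewrite linear0.
- move=> _ _ [f [Mf <- Cf]] [g [Mg <- Cg]]; exists (f + g); split=> [i id||].
  + exact: MD (Mf i id) (Mg i id).
  + reflexivity.
  + by rewrite linearD; exact: CD.
- move=> r _ [f [Mf <- Cf]]; exists (r *: f); split=> [i id||].
  + exact (MZ r _ (Mf i id)).
  + reflexivity.
  + by rewrite linearZ; exact: CZ.
- move=> j _ jm [f [Mf <- Cf]]; exists (sigma j \o f); split=> [i id||].
  + exact: MS jm (Mf i id).
  + reflexivity.
  + by rewrite -polyX_sigma; apply: CS => //; exact: ltnW.
Qed.

Lemma lead_mono k k' d d' u : (k <= k')%N -> (d <= d')%N -> lead k d u -> lead k' d' u.
Proof.
move=> kk' /subnK <-; elim: (d' - d)%N => [|n IH] /=.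
  by case=> f [Mf fd Cf]; exists f; split => //; exact: chain_mono Cf.
case/IH=> f [Mf fd Cf]; exists (fun i => if i is i'.+1 then f i' else 0).
split => //; first by case=> [|i] /=; [case: subM | exact: Mf].
by rewrite polyX_mulX; case: (subC k') => _ _ _; apply.
Qed.

Lemma lead_stable : exists c, forall d k u, (c <= k)%N -> lead k d u -> lead c d u.
Proof.
have [c0 c0P] := noeM (fun k => lead_submodule k k)
  (fun k u => lead_mono (leqnSn k) (leqnSn k)) (fun k => @lead_in k k).
have [c cP] := choice (fun d => noeM (fun k => lead_submodule k d)
  (fun k u => lead_mono (leqnSn k) (leqnn d)) (fun k => @lead_in k d)).
(* The diagonal bound [c0] covers every degree [d >= c0]; the finitely many
   degrees [d < c0] stabilize separately, at [c d]. *)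
exists (maxn c0 (\max_(d < c0) c d)) => d k u Hk Hu.
have [dc0|c0d] := ltnP d c0.
  have cdC : (c d <= maxn c0 (\max_(d < c0) c d))%N.
    by rewrite leq_max (leq_bigmax_cond (Ordinal dc0)) ?orbT.
  exact: lead_mono cdC (leqnn d) (cP d k u (leq_trans cdC Hk) Hu).
have kd : (c0 <= maxn k d)%N by rewrite leq_max c0d orbT.
apply: lead_mono (leq_maxl _ _) c0d (c0P _ _ kd _).
exact: lead_mono (leq_maxl k d) (leq_maxr k d) Hu.
Qed.

Lemma chain_stable : exists c, forall k v, (c <= k)%N -> C k v -> C c v.
Proof.
have [c cP] := lead_stable; exists c => k v ck Ckv.
have [d [f [Mf vE]]] := C_adjoin Ckv; rewrite {v}vE in Ckv *.
elim: d f Mf Ckv => [|d IH] f Mf Ckv; first by rewrite /polyX big_ord0; case: (subC c).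
(* Cancel the leading coefficient of [f] against an element of [C c]. *)
have [g [Mg gd Cg]] : lead c d (f d) by apply: cP ck _; exists f.
have Ckg : C k (polyX d.+1 g) := chain_mono incC ck Cg.
rewrite -(subrK (polyX d.+1 g) (polyX d.+1 f)) polyX_sub_lead //.
have [_ CD _ _] := subC c; apply: CD Cg; apply: IH.
  by move=> i id; apply: submoduleB subM (Mf _ _) (Mg _ _); exact: ltnW.
by rewrite -polyX_sub_lead //; apply: submoduleB (subC k) Ckv Ckg.
Qed.

End Chain.

Theorem noetherian_adjoin M :
  submodule m M -> noetherian_mod m M -> noetherian_mod m.+1 (adjoin M).
Proof.
move=> subM noeM C subC incC C_adjoin; exact: chain_stable subM noeM subC incC C_adjoin.
Qed.

End Adjoin.
End HilbertBasis.

Section ReesModule.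
Variable R : comPzRingType.

(* [v k i] is the [i]-th coordinate of the degree-[k] component of [v];
   [shift c] is multiplication by [c t]. *)
Definition gvec := nat -> nat -> R^o.
Implicit Types (u v : gvec) (c r z : R).

Lemma gvec_ext u v : (forall k i, u k i = v k i) -> u = v.
Proof. by move=> uv; apply/funext => k; apply/funext => i; exact: uv. Qed.

Lemma gvecDE u v k i : (u + v) k i = u k i + v k i. Proof. by []. Qed.
Lemma gvecBE u v k i : (u - v) k i = u k i - v k i. Proof. by []. Qed.
Lemma gvecZE r v k i : (r *: v) k i = r * v k i. Proof. by []. Qed.

Definition shift c v : gvec := fun k i => if k is k'.+1 then c * v k' i else 0.

Lemma shift_is_linear c : linear (shift c).
Proof.
move=> r u v; apply: gvec_ext => -[|k] i /=; rewrite /shift /=.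
  by rewrite [RHS]addr0; symmetry; exact: mulr0.
by rewrite mulrDr mulrCA.
Qed.

HB.instance Definition _ c :=
  GRing.isLinear.Build R gvec gvec *:%R (shift c) (shift_is_linear c).

Lemma shiftC c c' v : shift c (shift c' v) = shift c' (shift c v).
Proof. by apply: gvec_ext => -[|[|k]] i //=; rewrite /shift ?mulr0 // mulrCA. Qed.

Definition single k i z : gvec := fun k' i' => if (k' == k) && (i' == i) then z else 0.

Lemma single0 k i : single k i 0 = 0.
Proof. by apply: gvec_ext => k' i'; rewrite /single; case: ifP. Qed.

Lemma singleD k i z z' : single k i (z + z') = single k i z + single k i z'.
Proof.
by apply: gvec_ext => k' i'; rewrite gvecDE /single; case: ifP; rewrite ?addr0.
Qed.

Lemma singleM k i r z : single k i (r * z) = r *: single k i z.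
Proof.
by apply: gvec_ext => k' i'; rewrite gvecZE /single; case: ifP; rewrite ?mulr0.
Qed.

Lemma shift_single c k i z : shift c (single k i z) = single k.+1 i (c * z).
Proof.
by apply: gvec_ext => -[|k'] i' //=; rewrite /shift /single /=; case: ifP; rewrite ?mulr0.
Qed.

Definition homog n k (u : nat -> R) : gvec :=
  fun k' i => if (k' == k) && (i < n)%N then u i else 0.

Lemma homog_sum n k (u : nat -> R) : homog n k u = \sum_(i < n) single k i (u i).
Proof.
elim: n => [|n IH].
  by rewrite big_ord0; apply: gvec_ext => k' i; rewrite /homog andbF.
rewrite big_ord_recr -IH /=; apply: gvec_ext => k' i.
rewrite gvecDE /homog /single ltnS leq_eqVlt; case: (k' == k) => /=; last by rewrite addr0.
by case: (ltngtP i n) => [_|_|->]; rewrite ?eqxx ?addr0 ?add0r.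
Qed.

Definition deg0 n v := forall k i, (0 < k)%N || (n <= i)%N -> v k i = 0.

Lemma single_deg0 n i z : (i < n)%N -> deg0 n (single 0 i z).
Proof.
move=> ilt [|k] i' //= ni'; rewrite /single /=; case: eqP => // ii'.
by move: ilt; rewrite -ii' ltnNge ni'.
Qed.

Section Deg0.
Variable sigma : nat -> {linear gvec -> gvec}.

Lemma deg0_submodule n : submodule sigma 0 (deg0 n).
Proof.
split => // [u v u0 v0 | r v v0] k i ki; rewrite ?gvecDE ?gvecZE.
  by rewrite u0 ?v0 ?addr0.
by rewrite v0 ?mulr0.
Qed.

Section CoordinateSplit.
Variables (n : nat) (C : nat -> gvec -> Prop).
Hypotheses (subC : forall k, submodule sigma 0 (C k)) (incC : forall k v, C k v -> C k.+1 v).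
Hypothesis C_deg0 : forall k v, C k v -> deg0 n.+1 v.

Definition coord_ideal k x := exists2 v, C k v & v 0%N n = x.

Definition coord_ker k v := C k v /\ v 0%N n = 0.

Lemma coord_ideal_ideal k : is_ideal (coord_ideal k).
Proof.
have [C0 CD CZ _] := subC k; split; [|split].
- by exists 0.
- by move=> _ _ [u Cu <-] [v Cv <-]; exists (u + v); auto.
- by move=> r _ [v Cv <-]; exists (r *: v); auto.
Qed.

Lemma coord_ker_submodule k : submodule sigma 0 (coord_ker k).
Proof.
have [C0 CD CZ _] := subC k; split => //.
- by move=> u v [Cu u0] [Cv v0]; split; [auto | rewrite gvecDE u0 v0 addr0].
- by move=> r v [Cv v0]; split; [auto | rewrite gvecZE v0 mulr0].
Qed.

Lemma coord_ker_deg0 k v : coord_ker k v -> deg0 n v.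
Proof.
case=> /C_deg0 v0 vn0 [|k'] i /= ni; last exact: v0.
by move: ni; rewrite leq_eqVlt => /orP [/eqP <- // | ni]; apply: v0; rewrite ni orbT.
Qed.

Lemma deg0S_chain_stable : noetherian R -> noetherian_mod sigma 0 (deg0 n) ->
  exists b, forall k v, (b <= k)%N -> C k v -> C b v.
Proof.
move=> noeR noe_n.
have [b1 b1P] := noeR _ coord_ideal_ideal
  (fun k _ '(ex_intro2 v Cv vx) => ex_intro2 _ _ v (incC Cv) vx).
have [b2 b2P] := noe_n _ coord_ker_submodule
  (fun k v '(conj Cv v0) => conj (incC Cv) v0) coord_ker_deg0.
exists (maxn b1 b2) => k v ck Ckv.
have b1k : (b1 <= k)%N := leq_trans (leq_maxl b1 b2) ck.
have b2k : (b2 <= k)%N := leq_trans (leq_maxr b1 b2) ck.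
have [w Cw wv] : coord_ideal b1 (v 0%N n) by apply/(b1P k b1k); exists v.
have [Cvw _] : coord_ker b2 (v - w).
  apply: (b2P k _ b2k); split; last by rewrite gvecBE wv subrr.
  exact: submoduleB (subC k) Ckv (chain_mono incC b1k Cw).
have [_ CD _ _] := subC (maxn b1 b2).
have := CD _ _ (chain_mono incC (leq_maxr b1 b2) Cvw) (chain_mono incC (leq_maxl b1 b2) Cw).
by rewrite subrK.
Qed.

End CoordinateSplit.

Lemma noetherian_deg0 n : noetherian R -> noetherian_mod sigma 0 (deg0 n).
Proof.
move=> noeR; elim: n => [|n IH] C subC incC C_deg0.
  exists 0%N => k v _ Ckv.
  have -> : v = 0 by apply: gvec_ext => k' i; apply: (C_deg0 _ _ Ckv); rewrite orbT.
  by case: (subC 0%N).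
exact: deg0S_chain_stable subC incC C_deg0 noeR IH.
Qed.

End Deg0.
End ReesModule.

Section ArtinRees.
Variables (R : comPzRingType) (I J K : R -> Prop) (s : nat) (a : nat -> R).
Hypotheses (noeR : noetherian R) (iJ : is_ideal J).
Hypothesis aI : forall j, (j < s)%N -> I (a j).
Hypothesis gen : forall x, I x -> exists r : nat -> R, x = \sum_(j < s) r j * a j.

Lemma colon_of_gens A x : is_ideal A -> (forall j, (j < s)%N -> A (x * a j)) -> colon A I x.
Proof.
move=> iA Ax b /gen [r ->]; rewrite mulr_sumr; apply: ideal_sum => // j.
by rewrite mulrCA; apply: ideal_mull => //; exact: Ax.
Qed.

Definition ashift j : {linear gvec R -> gvec R} := shift (a j).

Lemma ashiftC i j v : ashift i (ashift j v) = ashift j (ashift i v).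
Proof. exact: shiftC. Qed.

(* [rees s] is the Rees module [(+)_k I^k R^s t^k], generated over
   [R[a_0 t, ..., a_(s-1) t]] by [R^s] placed in degree 0. *)
Fixpoint rees m : gvec R -> Prop :=
  if m is m'.+1 then adjoin ashift m' (rees m') else deg0 s.

Lemma rees_props m : [/\ submodule ashift m (rees m), noetherian_mod ashift m (rees m)
  & forall v, deg0 s v -> rees m v].
Proof.
elim: m => [|m [subF noeF F0]] /=.
  by split=> //; [exact: deg0_submodule | exact: noetherian_deg0].
split; first exact: adjoin_submodule ashiftC _ _ subF.
  exact: noetherian_adjoin ashiftC _ _ subF noeF.
by move=> v /F0; exact: adjoin_sub.
Qed.

Lemma single_in_rees k z i : idealX I k z -> (i < s)%N -> rees s (single k i z).
Proof.
have [[F0 FD FZ FS] _ F0s] := rees_props s.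
elim: k z => [|k IH] z Iz si; first exact/F0s/single_deg0.
pose G z := rees s (single k.+1 i z).
have iG : is_ideal G.
  by split; [|split] => [|x y|r x]; rewrite /G ?single0 ?singleD ?singleM; auto.
case: Iz => [m [x [d [xd ->]]]]; apply: (ideal_sum iG) => l.
have [Ix Id] := xd l; have [r ->] := gen Id.
rewrite mulr_sumr; apply: (ideal_sum iG) => j.
rewrite mulrCA; apply: (ideal_mull _ iG).
by rewrite /G mulrC -shift_single; exact: FS (IH _ Ix si).
Qed.

Definition colon_vec k v := exists x (u : nat -> R),
  [/\ forall i, (i < s)%N -> J (u i - x * a i),
      forall i, (i < s)%N -> idealM (idealX I k) K (u i) & v = homog s k u].

Lemma colon_vec_rees k v : colon_vec k v -> rees s v.
Proof.
case=> x [u [_ uIK ->]]; rewrite homog_sum.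
have [[F0 FD _ _] _ _] := rees_props s.
apply: big_ind => // i _; apply: single_in_rees (ltn_ord i).
exact: idealM_subl (idealX_ideal I k) (uIK _ (ltn_ord i)).
Qed.

Lemma colon_vec_of_colon n x : colon (idealD J (idealM (idealX I n) K)) I x ->
  exists u : nat -> R, forall i, (i < s)%N ->
    J (u i - x * a i) /\ idealM (idealX I n) K (u i).
Proof.
move=> xP; have u_ex i : exists w, (i < s)%N ->
    J (w - x * a i) /\ idealM (idealX I n) K w.
  have [si|_] := ltnP i s; last by exists 0.
  have [j [w [Jj [Iw ->]]]] := xP _ (aI si); exists w => _.
  by rewrite opprD addrCA subrr addr0; split; [exact: ideal_opp|].
by have [u uP] := choice u_ex; exists u.
Qed.

Definition colon_span k :=
  span ashift s (fun v => exists2 k', (k' <= k)%N & colon_vec k' v).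

Lemma colon_span_stable : exists c, forall k v, (c <= k)%N -> colon_span k v -> colon_span c v.
Proof.
have [subF noeF _] := rees_props s.
apply: noeF => [k | k v Gv N subN sub | k v Gv].
- exact: span_submodule.
- by apply: Gv => // w [k' k'k wk']; apply: sub; exists k' => //; exact: leqW.
- by apply: Gv => // w [k' _]; exact: colon_vec_rees.
Qed.

Section Level.
Variable c : nat.

Definition level k := if (k <= c)%N then colon (idealD J (idealM (idealX I k) K)) I
                      else idealD J (idealM (idealX I k.-1) K).

Lemma level_ideal k : is_ideal (level k).
Proof.
by rewrite /level; case: leqP => _; [apply: colon_ideal|];
  exact: idealD_ideal iJ (idealXM_ideal _ _ _).
Qed.

Lemma level_mul k d y : I d -> level k y -> level k.+1 (d * y).
Proof.
rewrite /level => Id; case: (leqP k.+1 c) => [kc|ck].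
  rewrite (ltnW kc) => yP b Ib; rewrite -mulrA.
  exact: idealD_idealXM_mulS iJ Id (yP b Ib).
case: leqP => [kc yP|ck' yP]; first by rewrite mulrC; exact: yP.
by rewrite -(prednK (leq_ltn_trans (leq0n c) ck')); exact: idealD_idealXM_mulS.
Qed.

Definition level_vec v := forall k,
  exists2 y, level k y & forall i, (i < s)%N -> J (v k i - y * a i).

Lemma level_vec_submodule : submodule ashift s level_vec.
Proof.
have J0 := ideal0 iJ; split.
- move=> k; exists 0; first exact: ideal0 (level_ideal k).
  by move=> i _; rewrite mul0r subr0.
- move=> u v uP vP k; have [y yl yu] := uP k; have [y' y'l y'v] := vP k.
  exists (y + y'); first exact: ideal_add (level_ideal k) yl y'l.
  move=> i si; rewrite gvecDE mulrDl opprD addrACA.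
  exact: ideal_add iJ (yu i si) (y'v i si).
- move=> r v vP k; have [y yl yv] := vP k.
  exists (r * y); first exact: ideal_mull (level_ideal k) yl.
  by move=> i si; rewrite gvecZE -mulrA -mulrBr; apply: ideal_mull; auto.
- move=> j v js vP [|k].
    by exists 0 => [|i _]; [exact: ideal0 (level_ideal 0) | rewrite mul0r subr0].
  have [y yl yv] := vP k; exists (a j * y); first exact: level_mul (aI js) yl.
  by move=> i si; rewrite /= /shift -mulrA -mulrBr; apply: ideal_mull; auto.
Qed.

Lemma colon_vec_level k v : (k <= c)%N -> colon_vec k v -> level_vec v.
Proof.
move=> kc [x [u [uJ uIK ->]]] k'; have [->|k'k] := eqVneq k' k.
  exists x; last by move=> i si; rewrite /homog eqxx si; exact: uJ.
  rewrite /level kc; apply: colon_of_gens (idealD_ideal iJ (idealXM_ideal _ _ _)) _ => i si.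
  exists (- (u i - x * a i)), (u i).
  by split; [exact: ideal_opp (uJ i si) | split; [exact: uIK | rewrite opprB subrK]].
exists 0; first exact: ideal0 (level_ideal k').
by move=> i _; rewrite /homog (negbTE k'k) mul0r subr0; exact: ideal0.
Qed.

Lemma colon_span_level k v : (k <= c)%N -> colon_span k v -> level_vec v.
Proof.
move=> kc; apply; first exact: level_vec_submodule.
by move=> w [k' k'k]; apply: colon_vec_level; exact: leq_trans kc.
Qed.

Lemma colon_sub_of_level n x (u : nat -> R) : (c < n)%N ->
  level_vec (homog s n u) -> (forall i, (i < s)%N -> J (u i - x * a i)) ->
  idealD (colon J I) (idealM (idealX I n.-1) K) x.
Proof.
move=> cn /(_ n) [y]; rewrite /level leqNgt cn /= => -[j [z [Jj [Iz yE]]]] yu uJ.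
exists (x - y + j), z; split; last by split => //; rewrite yE; ring.
apply: colon_of_gens iJ _ => i si; rewrite mulrDl; apply: ideal_add iJ _ (ideal_mulr _ iJ Jj).
have -> : (x - y) * a i = (u i - y * a i) - (u i - x * a i) by ring.
by apply: ideal_sub iJ _ (uJ i si); move: (yu i si); rewrite /homog eqxx si.
Qed.

End Level.

Lemma colon_stable : exists c, forall n x, (c < n)%N ->
  colon (idealD J (idealM (idealX I n) K)) I x ->
  idealD (colon J I) (idealM (idealX I n.-1) K) x.
Proof.
have [c cP] := colon_span_stable; exists c => n x cn /colon_vec_of_colon [u uP].
apply: (colon_sub_of_level (u := u) cn); last by move=> i /uP [].
apply: (colon_span_level (leqnn c)); apply: (cP n) (ltnW cn) _.
by move=> N subN sub; apply: sub; exists n => //; exists x, u; split => // i /uP [].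
Qed.

End ArtinRees.

Theorem corollary2p6 (R : comPzRingType) (I J K : R -> Prop) :
  noetherian R -> is_ideal I -> is_ideal J -> is_ideal K ->
  exists t : nat, (0 < t)%N /\
    forall n : nat, (t <= n)%N ->
      set_eq (colon (idealD J (idealM (idealX I n) K)) I)
             (idealD (colon J I) (idealM (idealX I n.-1) K)).
Proof.
move=> noeR iI iJ _.
have [l [lI lspan]] := noetherian_fg noeR iI.
have [c cP] := colon_stable K noeR iJ (fun j _ => lI j) lspan.
exists c.+1; split => // n cn x; split; first exact: cP.
exact: idealD_colon_sub (leq_trans (ltn0Sn c) cn).
Qed.
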